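(* Let $\mathcal P$ be a pre-Hahn-localizable family of probability measures on $(\Omega,\mathcal F)$ with localization $\mathcal Q$ whose supports $\{S_Q\}$ are pairwise disjoint, and let $\mathcal H=\mathcal H_{\mathcal F}^{\mathcal Q}$ be its Hahn-extension. Then for every $\mu\in\mathrm{ca}(\mathcal P)$ the set $\mathcal Q(\mu)$ is at most countable, the formula $\mu^{\mathcal Q}(A)=\sum_{Q\in\mathcal Q(\mu)}\mu(A\cap S_Q)$, $A\in\mathcal H$, defines a finite signed measure on $\mathcal H$ extending $\mu$, and $|\mu^{\mathcal Q}|=|\mu|^{\mathcal Q}$.
   Context: $\mathrm{ca}(\mathcal P)$ is the set of finite signed measures $\mu$ on $\mathcal F$ with $|\mu|\ll P$ for some $P\in\mathcal P$; $|\mu|$ is the total variation measure. $\mathcal P\lll\mathcal Q$ means each $P\in\mathcal P$ is absolutely continuous w.r.t. some $Q\in\mathcal Q$; $\mathrm{sconv}(\mathcal Q)$ denotes countable convex combinations. $\mathcal P$ is pre-Hahn-localizable with localization $\mathcal Q$ and supports $S_Q\in\mathcal F$ if $Q(S_R)=\delta_{QR}$ for $Q,R\in\mathcal Q$ and $\mathcal Q\lll\mathcal P\lll\mathrm{sconv}(\mathcal Q)$. Hahn-extension: $\mathcal H_{\mathcal F}^{\mathcal Q}=\sigma\big(\mathcal F\cup\{\bigcup_{Q\in\mathcal Q}E_Q:E_Q\in\mathcal F,E_Q\subseteq S_Q\}\big)$. $\mathcal Q(\mu)=\{Q\in\mathcal Q:|\mu|(S_Q)>0\}$; since $\mathcal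 Q(|\mu|)=\mathcal Q(\mu)$, $|\mu|^{\mathcal Q}(A)=\sum_{Q\in\mathcal Q(\mu)}|\mu|(A\cap S_Q)$. *)

(* Two sigma-algebras on one
   carrier Omega (F and its Hahn-extension H) are handled as explicit set
   systems (predicates on sets) rather than as a measurableType instance. *)
From HB Require Import structures.
From mathcomp Require Import all_boot all_order all_algebra.
From mathcomp Require Import all_classical all_reals all_analysis.
Set Implicit Arguments. Unset Strict Implicit. Unset Printing Implicit Defensive.
Import Order.TTheory GRing.Theory Num.Theory.
Import numFieldNormedType.Exports.
Local Open Scope classical_set_scope.
Local Open Scope ring_scope.

Section defs.
Variables (R : realType) (Omega : Type).
Implicit Types (F : set (set Omega)) (mu P Q : set Omega -> R).

Definition is_sigma_algebra F := sigma_algebra setT F.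

Definition is_signed_measure F mu :=
  mu set0 = 0 /\
  forall B : nat -> set Omega, (forall i, F (B i)) -> trivIset setT B ->
    (fun n => \sum_(i < n) mu (B i)) @ \oo --> mu (\bigcup_i B i).

Definition is_probability F P :=
  [/\ is_signed_measure F P, (forall A, F A -> 0 <= P A) & P setT = 1].

Definition tot_var F mu (A : set Omega) : \bar R :=
  ereal_sup [set x | exists (n : nat) (B : nat -> set Omega),
     [/\ (forall i, F (B i)), trivIset `I_n B, \bigcup_(i in `I_n) B i = A &
        x = ((\sum_(i < n) `|mu (B i)|)%:E)]].

Definition abs_cont F (nu : set Omega -> \bar R) P :=
  forall A, F A -> P A = 0 -> nu A = 0%E.

Definition abs_cont_r F (nu : set Omega -> R) P :=
  forall A, F A -> P A = 0 -> nu A = 0.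

Definition ca F (Pf : set (set Omega -> R)) : set (set Omega -> R) :=
  [set mu | is_signed_measure F mu /\
     exists2 P, Pf P & abs_cont F (tot_var F mu) P].

Definition llless F (Pf Qf : set (set Omega -> R)) :=
  forall P, Pf P -> exists2 Q, Qf Q & abs_cont_r F P Q.

Definition sconv F (Qf : set (set Omega -> R)) : set (set Omega -> R) :=
  [set nu | exists (c : nat -> R) (q : nat -> (set Omega -> R)),
     [/\ (forall n, Qf (q n)), (forall n, 0 <= c n),
         (fun n => \sum_(i < n) c i) @ \oo --> (1 : R) &
         forall A, F A -> (fun n => \sum_(i < n) c i * q i A) @ \oo --> nu A]].

Definition pre_hahn_localizable F (Pf Qf : set (set Omega -> R))
    (S : (set Omega -> R) -> set Omega) :=
  [/\ (forall Q, Qf Q -> is_probability F Q),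
      (forall Q, Qf Q -> F (S Q)),
      (forall Q Q', Qf Q -> Qf Q' -> Q (S Q') = if pselect (Q = Q') then 1 else 0),
      llless F Qf Pf & llless F Pf (sconv F Qf)].

Definition hahn_extension F (Qf : set (set Omega -> R))
    (S : (set Omega -> R) -> set Omega) : set (set Omega) :=
  smallest (sigma_algebra setT)
    (F `|` [set A | exists E : (set Omega -> R) -> set Omega,
              (forall Q, Qf Q -> F (E Q) /\ E Q `<=` S Q) /\
              A = \bigcup_(Q in Qf) E Q]).

Definition Qmu F (Qf : set (set Omega -> R)) (S : (set Omega -> R) -> set Omega) mu :=
  [set Q | Qf Q /\ (0 < tot_var F mu (S Q))%E].

Definition abs_summable (I : choiceType) (J : set I) (f : I -> R) :=
  (esum J (fun i => (`|f i|)%:E) < +oo)%E.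

Definition family_sum (I : choiceType) (J : set I) (f : I -> R) : R :=
  fine (esum J (fun i => (Num.max (f i) 0)%:E)) -
  fine (esum J (fun i => (Num.max (- f i) 0)%:E)).

End defs.

From HB Require Import structures.
From mathcomp Require Import all_boot all_order all_algebra.
From mathcomp Require Import all_classical all_reals all_analysis.
From mathcomp Require Import lra.
Import Order.TTheory GRing.Theory Num.Theory.
Import numFieldNormedType.Exports.
Local Open Scope classical_set_scope.
Local Open Scope ring_scope.
Set Implicit Arguments. Unset Strict Implicit. Unset Printing Implicit Defensive.

(* A Hahn decomposition (P, N) of mu on F splits mu into the nonnegative
   measures mu+ = mu(. & P) and mu- = -mu(. & N), and |mu| = mu+ + mu-.  Since
   mu is dominated by some P0 in Pf <<< sconv Qf, it is carried by the union of
   countably many supports S (q n); hence Q(mu) is contained in {q n} and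
   m(A) = sum_(Q in Q(mu)) m(A & S Q) for m = mu+, mu- and A in F.  For A in the
   Hahn-extension H every A & S Q still lies in F, and the right-hand side is
   countably additive in A, so it extends m to H.  Then mu^Q = (mu+)^Q - (mu-)^Q
   extends mu, (P, N) is still a Hahn decomposition of mu^Q on H, and
   |mu^Q| = (mu+)^Q + (mu-)^Q = |mu|^Q. *)

Section sigma_algebra.
Variables (Omega : Type) (G : set (set Omega)).
Hypothesis HG : is_sigma_algebra G.

Lemma salg0 : G set0. Proof. by case: HG. Qed.

Lemma salgC A : G A -> G (~` A).
Proof. by case: HG => _ GC _ /GC; rewrite setTD. Qed.

Lemma salgT : G setT. Proof. by rewrite -setC0; exact/salgC/salg0. Qed.

Lemma salg_bigcup (B : (set Omega)^nat) : (forall i, G (B i)) -> G (\bigcup_i B i).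
Proof. by case: HG => _ _; apply. Qed.

Lemma salgU A B : G A -> G B -> G (A `|` B).
Proof.
by move=> GA GB; rewrite -bigcup2E; apply: salg_bigcup => -[|[|i]] //=; exact: salg0.
Qed.

Lemma salgI A B : G A -> G B -> G (A `&` B).
Proof. by move=> GA GB; rewrite -[A `&` B]setCK setCI; apply/salgC/salgU; exact: salgC. Qed.

Lemma salgD A B : G A -> G B -> G (A `\` B).
Proof. by move=> GA GB; apply: salgI => //; exact: salgC. Qed.

End sigma_algebra.

Section signed_measure.
Variables (R : realType) (Omega : Type) (G : set (set Omega)) (m : set Omega -> R).
Hypotheses (HG : is_sigma_algebra G) (Hm : is_signed_measure G m).

Lemma signed_measure0 : m set0 = 0. Proof. by case: Hm. Qed.

Lemma signed_measure_fin_additive n (B : nat -> set Omega) : (forall i, G (B i)) ->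
  trivIset `I_n B -> \sum_(i < n) m (B i) = m (\bigcup_(i in `I_n) B i).
Proof.
move=> GB tB; pose B' i := if (i < n)%N then B i else set0.
have GB' i : G (B' i) by rewrite /B'; case: ifP => _; [exact: GB|exact: salg0].
have tB' : trivIset setT B'.
  move=> i j _ _; rewrite /B'.
  case: ifP => ilt; case: ifP => jlt; rewrite ?setI0 ?set0I; try by case.
  exact: tB.
have -> : \bigcup_(i in `I_n) B i = \bigcup_i B' i.
  apply/seteqP; split => x; first by move=> [i /= ilt Bx]; exists i; rewrite // /B' ilt.
  by move=> [i _]; rewrite /B'; case: ifP => // ilt Bx; exists i.
suff h : (fun k => \sum_(i < k) m (B' i)) @ \oo --> \sum_(i < n) m (B i).
  exact: (cvg_unique _ h (Hm.2 B' GB' tB')).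
apply: cvg_near_cst; near=> k.
have nk : (n <= k)%N by near: k; exists n.
rewrite -(big_mkord xpredT (fun i => m (B' i))).
rewrite (@big_cat_nat _ _ _ n 0 k _ _ (leq0n n) nk) /=.
have -> : \sum_(n <= i < k) m (B' i) = 0.
  rewrite big_nat_cond big1 // => i /andP[/andP[ni _] _].
  by rewrite /B' ltnNge ni signed_measure0.
by rewrite addr0 big_mkord; apply: eq_bigr => i _; rewrite /B' ltn_ord.
Unshelve. all: by end_near.
Qed.

Lemma signed_measureU A B : G A -> G B -> A `&` B = set0 -> m (A `|` B) = m A + m B.
Proof.
move=> GA GB AB; rewrite -bigcup2inE -signed_measure_fin_additive.
- by rewrite big_ord_recr /= big_ord1.
- by move=> [|[|i]] //=; exact: salg0.
- by apply: sub_trivIset (subsetT _) _; rewrite -trivIset_bigcup2.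
Qed.

Lemma signed_measure_splitI A C : G A -> G C -> m A = m (A `&` C) + m (A `\` C).
Proof.
move=> GA GC; rewrite -signed_measureU ?setUIDK //; [exact: salgI|exact: salgD|].
by apply/seteqP; split => x // [[_ Cx] [_ nCx]].
Qed.

Lemma le_signed_measure : (forall X, G X -> 0 <= m X) ->
  forall Y Z, G Y -> G Z -> Y `<=` Z -> m Y <= m Z.
Proof.
move=> m_ge0 Y Z GY GZ YZ; rewrite (signed_measure_splitI GZ GY) setIidr //.
by rewrite lerDl; apply: m_ge0; exact: salgD.
Qed.

Lemma signed_measure_setI C : G C -> is_signed_measure G (fun X => m (X `&` C)).
Proof.
move=> GC; split; first by rewrite set0I signed_measure0.
move=> B GB tB; rewrite setI_bigcupl; apply: Hm.2; first by move=> i; exact: salgI.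
by move=> i j _ _ [x [[Bi _] [Bj _]]]; apply: tB => //; exists x.
Qed.

Lemma signed_measureN : is_signed_measure G (fun X => - m X).
Proof.
split; first by rewrite signed_measure0 oppr0.
move=> B GB tB /=; under eq_fun do rewrite sumrN.
by apply: cvgN; exact: Hm.2.
Qed.

Definition is_hahn_decomposition (P N : set Omega) :=
  [/\ G P /\ (forall D, G D -> D `<=` P -> 0 <= m D),
      G N /\ (forall D, G D -> D `<=` N -> m D <= 0),
      P `|` N = setT & P `&` N = set0].

Section hahn_decomposition.
Variables P N : set Omega.
Hypothesis hPN : is_hahn_decomposition P N.

Lemma hahn_setIP_ge0 A : G A -> 0 <= m (A `&` P).
Proof.
by case: hPN => [[GP posP] _ _ _] GA; apply: posP; [exact: salgI|exact: subIsetr].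
Qed.

Lemma hahn_setIN_le0 A : G A -> m (A `&` N) <= 0.
Proof.
by case: hPN => _ [GN negN] _ _ GA; apply: negN; [exact: salgI|exact: subIsetr].
Qed.

Lemma hahn_splitI A : G A -> m A = m (A `&` P) + m (A `&` N).
Proof.
case: hPN => [[GP _] _ PN PN0] GA; rewrite (signed_measure_splitI GA GP); congr (_ + m _).
apply/seteqP; split => x [Ax Px]; split => //.
  by have : setT x by []; rewrite -PN => -[].
by move=> Pnx; have : (P `&` N) x by []; rewrite PN0.
Qed.

Lemma abs_le_hahn A : G A -> `|m A| <= m (A `&` P) - m (A `&` N).
Proof.
move=> GA; have := hahn_setIP_ge0 GA; have := hahn_setIN_le0 GA.
rewrite (hahn_splitI GA) ler_norml; lra.
Qed.

Lemma tot_var_hahn A : G A -> tot_var G m A = (m (A `&` P) - m (A `&` N))%:E.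
Proof.
have [[GP _] [GN _] PNT PN0] := hPN; move=> GA; apply/eqP; rewrite eq_le; apply/andP.
split; first apply: ub_ereal_sup => _ [n [B [GB tB <- ->]]].
  have tBI C : trivIset `I_n (fun i => B i `&` C).
    by move=> i j ? ? [x [[Bi _] [Bj _]]]; apply: tB => //; exists x.
  rewrite lee_fin !setI_bigcupl -!signed_measure_fin_additive -?sumrB //.
  - by apply: ler_sum => i _; exact: abs_le_hahn.
  - by move=> i; exact: salgI.
  - by move=> i; exact: salgI.
apply: ereal_sup_ubound; exists 2%N, (bigcup2 (A `&` P) (A `&` N)); split.
- by move=> [|[|i]] //=; [exact: salgI|exact: salgI|exact: salg0].
- apply: sub_trivIset (subsetT _) _; rewrite -trivIset_bigcup2.
  by rewrite setIACA PN0 setI0.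
- by rewrite bigcup2inE -setIUr PNT setIT.
- rewrite big_ord_recr /= big_ord1 /= ger0_norm ?ler0_norm ?hahn_setIP_ge0 //.
  exact: hahn_setIN_le0.
Qed.

End hahn_decomposition.
End signed_measure.

Lemma probability_null_outside (R : realType) (Omega : Type) (F : set (set Omega))
    (Q : set Omega -> R) (C Y : set Omega) :
  is_sigma_algebra F -> is_probability F Q -> F C -> Q C = 1 ->
  F Y -> Y `<=` ~` C -> Q Y = 0.
Proof.
move=> HF [HQ Q_ge0 QT] FC QC1 FY YC.
have QCc : Q (~` C) = 0.
  by move: QT; rewrite (signed_measure_splitI HF HQ (salgT HF) FC) setTI QC1 setTD; lra.
apply/eqP; rewrite eq_le Q_ge0 // andbT -QCc.
exact: (le_signed_measure HF HQ Q_ge0 FY (salgC HF FC) YC).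
Qed.

(* Measurable types of MathComp-Analysis are pointed, so the Hahn decomposition
   theorem of charge.v is applied to a copy of [Omega] pointed at some [w]. *)
Definition pointed_carrier (Omega : Type) (w : Omega) : Type := Omega.
HB.instance Definition _ Omega w := gen_eqMixin (@pointed_carrier Omega w).
HB.instance Definition _ Omega w := gen_choiceMixin (@pointed_carrier Omega w).
HB.instance Definition _ Omega w := isPointed.Build (@pointed_carrier Omega w) w.

Section hahn_decomposition_existence.
Variables (R : realType) (Omega : Type) (G : set (set Omega)) (m : set Omega -> R).
Hypotheses (HG : is_sigma_algebra G) (Hm : is_signed_measure G m).

Section pointed.
Variable w : Omega.
Let T := g_sigma_algebraType (G : set (set (pointed_carrier w))).
Let measurableE : (measurable : set (set T)) = G.
Proof. exact: sigma_algebra_id. Qed.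
Let nu (A : set T) : \bar R := (m A)%:E.
Let nu0 : nu set0 = 0%E. Proof. by rewrite /nu (signed_measure0 Hm). Qed.
Let nu_fin A : measurable A -> nu A \is a fin_num. Proof. by []. Qed.
Let nu_sigma_additive : semi_sigma_additive nu.
Proof.
move=> B; rewrite measurableE => GB tB _; rewrite /nu.
apply/cvg_EFin; first by apply: nearW => n; rewrite sumEFin.
apply: cvg_trans (Hm.2 B GB tB); apply: near_eq_cvg; apply: nearW => n /=.
by rewrite sumEFin /= big_mkord.
Qed.

Lemma hahn_decomposition_pointed : exists P N, is_hahn_decomposition G m P N.
Proof.
pose nuc : {charge set T -> \bar R} :=
  HB.pack nu (isCharge.Build _ _ _ nu nu0 nu_fin nu_sigma_additive).
have [P [N [[GP posP] [GN negN] PNT PN0]]] := Hahn_decomposition nuc.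
rewrite measurableE in GP GN; exists P, N; split => //.
- by split => // D GD DP; rewrite -lee_fin; apply: posP; rewrite ?measurableE.
- by split => // D GD DN; rewrite -lee_fin; apply: negN; rewrite ?measurableE.
Qed.

End pointed.

Lemma hahn_decomposition_exists : exists P N, is_hahn_decomposition G m P N.
Proof.
have [[w _]|Omega0] := pselect (exists w : Omega, True).
  exact: hahn_decomposition_pointed w.
have T0 : setT = set0 :> set Omega.
  by apply/seteqP; split => x // _; apply: Omega0; exists x.
have mD0 D : D `<=` set0 -> m D = 0 by rewrite subset0 => ->; exact: (signed_measure0 Hm).
exists set0, set0; split; rewrite ?setU0 ?setI0 //.
- by split => [|D _ /mD0 ->]; [exact: salg0|].
- by split => [|D _ /mD0 ->]; [exact: salg0|].
Qed.

End hahn_decomposition_existence.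

Section series.
Variable R : realType.

Lemma eseries_EFin (a : nat -> R) l : (fun n => \sum_(i < n) a i) @ \oo --> l ->
  (\sum_(i <oo) (a i)%:E)%E = l%:E.
Proof.
move=> al; apply: cvg_lim => //; apply/fine_cvgP; split.
  by apply: nearW => n; rewrite sumEFin.
apply: cvg_trans al; apply: near_eq_cvg; apply: nearW => n /=.
by rewrite sumEFin /= big_mkord.
Qed.

Lemma cvg_fine_nneseries (e : nat -> \bar R) : (forall i, 0 <= e i)%E ->
  (forall i, e i \is a fin_num) -> (\sum_(i <oo) e i)%E \is a fin_num ->
  (fun n => \sum_(i < n) fine (e i)) @ \oo --> fine (\sum_(i <oo) e i)%E.
Proof.
move=> e0 efin sfin.
have : (fun n => \sum_(0 <= i < n) e i)%E @ \oo --> (fine (\sum_(i <oo) e i))%:E.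
  by rewrite fineK //; apply: is_cvg_nneseries => n _ _; exact: e0.
move/fine_cvg; apply: cvg_trans; apply: near_eq_cvg; apply: nearW => n /=.
by rewrite -sum_fine // big_mkord.
Qed.

End series.

Section family_sum.
Variables (R : realType) (I : choiceType) (J : set I) (f f1 f2 : I -> R).
Hypotheses (f1_ge0 : forall i, J i -> 0 <= f1 i) (f2_ge0 : forall i, J i -> 0 <= f2 i).
Hypothesis fE : forall i, J i -> f i = f1 i - f2 i.
Hypotheses (f1_fin : esum J (fun i => (f1 i)%:E) \is a fin_num)
  (f2_fin : esum J (fun i => (f2 i)%:E) \is a fin_num).

Let esum_fin (g h : I -> R) : (forall i, J i -> 0 <= g i <= h i) ->
  esum J (fun i => (h i)%:E) \is a fin_num -> esum J (fun i => (g i)%:E) \is a fin_num.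
Proof.
move=> ghJ hfin; rewrite ge0_fin_numE; last by apply: esum_ge0 => i /ghJ /andP[? _].
apply: (@le_lt_trans _ _ (esum J (fun i => (h i)%:E))); last by rewrite ltey_eq hfin.
by apply: le_esum => i /ghJ /andP[_]; rewrite lee_fin.
Qed.

Lemma abs_summableB : abs_summable J f.
Proof.
rewrite /abs_summable -ge0_fin_numE ?esum_ge0 //.
apply: (@esum_fin _ (fun i => f1 i + f2 i)) => [i Ji|].
  rewrite normr_ge0 fE //= (le_trans (ler_normB _ _)) //.
  by rewrite !ger0_norm ?f1_ge0 ?f2_ge0.
under eq_esum do rewrite EFinD.
rewrite esumD => [|i /f1_ge0|i /f2_ge0] //; first by rewrite fin_numD f1_fin f2_fin.
Qed.

Lemma family_sumB : family_sum J f =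
  fine (esum J (fun i => (f1 i)%:E)) - fine (esum J (fun i => (f2 i)%:E)).
Proof.
set fp := fun i => Num.max (f i) 0; set fn := fun i => Num.max (- f i) 0.
have fp_ge0 i : 0 <= fp i by rewrite le_max lexx orbT.
have fn_ge0 i : 0 <= fn i by rewrite le_max lexx orbT.
have fpn i : J i -> fp i + f2 i = fn i + f1 i.
  move=> Ji; have := fE Ji; have := f1_ge0 Ji; have := f2_ge0 Ji; rewrite /fp /fn /=.
  case: (leP 0 (f i)) => f0.
    by rewrite max_r ?oppr_le0 //; lra.
  rewrite max_l; last by rewrite oppr_ge0 ltW.
  lra.
have fp_fin : esum J (fun i => (fp i)%:E) \is a fin_num.
  apply: (esum_fin _ f1_fin) => i Ji; rewrite fp_ge0 ge_max f1_ge0 // andbT fE //.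
  by rewrite lerBlDr lerDl f2_ge0.
have fn_fin : esum J (fun i => (fn i)%:E) \is a fin_num.
  apply: (esum_fin _ f2_fin) => i Ji; rewrite fn_ge0 ge_max f2_ge0 // andbT fE //.
  by rewrite opprB lerBlDr lerDl f1_ge0.
have : (esum J (fun i => (fp i)%:E) + esum J (fun i => (f2 i)%:E) =
        esum J (fun i => (fn i)%:E) + esum J (fun i => (f1 i)%:E))%E.
  rewrite -!esumD => [|i Ji|i Ji|i Ji|i Ji];
    rewrite ?lee_fin ?fp_ge0 ?fn_ge0 ?f1_ge0 ?f2_ge0 //.
  by apply: eq_esum => i Ji; rewrite -!EFinD fpn.
by move/(congr1 fine); rewrite !fineD // /family_sum -/fp -/fn; lra.
Qed.

End family_sum.

Section hahn_extension.
Variables (R : realType) (Omega : Type) (F : set (set Omega))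
  (Qf : set (set Omega -> R)) (S : (set Omega -> R) -> set Omega).

Local Notation H := (hahn_extension F Qf S).

Lemma hahn_extension_sigma_algebra : is_sigma_algebra H.
Proof. exact: smallest_sigma_algebra. Qed.

Lemma sub_hahn_extension A : F A -> H A.
Proof. by move=> FA; apply: sub_gen_smallest; left. Qed.

Hypotheses (HF : is_sigma_algebra F) (FS : forall Q, Qf Q -> F (S Q)).
Hypothesis S_disj : forall Q Q', Qf Q -> Qf Q' -> Q <> Q' -> S Q `&` S Q' = set0.

(* The sets whose traces on all supports lie in F form a sigma-algebra
   containing the generators: the trace of \bigcup_Q' E Q' on S Q is E Q,
   by disjointness of the supports. *)
Lemma hahn_extension_setI A Q : H A -> Qf Q -> F (A `&` S Q).
Proof.
move=> HA QQ; move: A HA Q QQ.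
apply: (@smallest_sub _ _ _ [set A | forall Q, Qf Q -> F (A `&` S Q)]).
  split.
  - by move=> Q _; rewrite set0I; exact: salg0.
  - move=> A FA Q QQ; have -> : (setT `\` A) `&` S Q = S Q `\` (A `&` S Q).
      by rewrite setDIr setDv setU0 setTD setIC setDE.
    by apply: salgD => //; [exact: FS|exact: FA].
  - by move=> B FB Q QQ; rewrite setI_bigcupl; apply: salg_bigcup => // i; exact: FB.
move=> A [FA Q QQ|[E [FE ->]] Q QQ]; first by apply: salgI => //; exact: FS.
have -> : (\bigcup_(Q' in Qf) E Q') `&` S Q = E Q.
  apply/seteqP; split=> [x [[Q' QQ' Ex] Sx]|x Ex].
    2: by split; [exists Q|exact: (FE Q QQ).2].
  have [<-//|neq] := pselect (Q' = Q).
  have : (S Q' `&` S Q) x by split=> //; exact: (FE Q' QQ').2.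
  by rewrite S_disj.
exact: (FE Q QQ).1.
Qed.

End hahn_extension.

Section first_occurrence.
Variables (T : Type) (q : nat -> T).

Definition first_occurrence : pred nat :=
  fun n => `[< forall k, (k < n)%N -> q k <> q n >].

Lemma first_occurrence_exists n : exists2 k, first_occurrence k & q k = q n.
Proof.
have qn : exists k, `[< q k = q n >] by exists n; exact/asboolP.
have [k /asboolP qk kmin] := ex_minnP qn; exists k => //.
apply/asboolP => j jk qj; have := kmin j; rewrite qj qk => /(_ (asboolT erefl)).
by rewrite leqNgt jk.
Qed.

Lemma first_occurrence_inj i j :
  first_occurrence i -> first_occurrence j -> q i = q j -> i = j.
Proof.
move=> /asboolP fi /asboolP fj qij; case: (ltngtP i j) => // [ij|ji].
- by have := fj _ ij.
- by have := fi _ ji; rewrite qij.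
Qed.

End first_occurrence.

Section localization.
Variables (R : realType) (Omega : Type) (F : set (set Omega))
  (Qf : set (set Omega -> R)) (S : (set Omega -> R) -> set Omega).
Hypotheses (HF : is_sigma_algebra F) (FS : forall Q, Qf Q -> F (S Q)).
Hypothesis S_disj : forall Q Q', Qf Q -> Qf Q' -> Q <> Q' -> S Q `&` S Q' = set0.
Variables (mu : set Omega -> R) (q : nat -> (set Omega -> R)).
Hypotheses (Hmu : is_signed_measure F mu) (Qf_q : forall n, Qf (q n)).
Hypothesis mu_null_off_supports :
  forall Y, F Y -> Y `<=` ~` (\bigcup_n S (q n)) -> tot_var F mu Y = 0%E.
Variables P N : set Omega.
Hypothesis hPN : is_hahn_decomposition F mu P N.

Local Notation H := (hahn_extension F Qf S).
Local Notation Qm := (Qmu F Qf S mu).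
Let U := \bigcup_n S (q n).
Let HH := hahn_extension_sigma_algebra F Qf S.

Let FH A : F A -> H A. Proof. exact: sub_hahn_extension. Qed.

Let FU : F U. Proof. by apply: salg_bigcup => // n; exact/FS/Qf_q. Qed.

Let FSI A Q : H A -> Qf Q -> F (A `&` S Q).
Proof. exact: hahn_extension_setI. Qed.

Let mu_pos X := mu (X `&` P).
Let mu_neg X := - mu (X `&` N).

Let mu_pos_signed : is_signed_measure F mu_pos.
Proof. by apply: signed_measure_setI => //; case: hPN => -[]. Qed.

Let mu_neg_signed : is_signed_measure F mu_neg.
Proof. by apply/signed_measureN/signed_measure_setI => //; case: hPN => _ []. Qed.

Let mu_pos_ge0 X : F X -> 0 <= mu_pos X. Proof. exact: (hahn_setIP_ge0 HF hPN). Qed.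

Let mu_neg_ge0 X : F X -> 0 <= mu_neg X.
Proof. by move=> FX; rewrite oppr_ge0; exact: (hahn_setIN_le0 HF hPN). Qed.

Lemma tot_var_hahnE X : F X -> tot_var F mu X = (mu_pos X + mu_neg X)%:E.
Proof. exact: tot_var_hahn. Qed.

Lemma tot_var_null_sub Y Z : F Y -> F Z -> Y `<=` Z ->
  (tot_var F mu Z <= 0)%E -> tot_var F mu Y = 0%E.
Proof.
move=> FY FZ YZ; rewrite !tot_var_hahnE // lee_fin => Z0; congr EFin.
have := le_signed_measure HF mu_pos_signed mu_pos_ge0 FY FZ YZ.
have := le_signed_measure HF mu_neg_signed mu_neg_ge0 FY FZ YZ.
have := mu_pos_ge0 FY; have := mu_neg_ge0 FY; lra.
Qed.

Lemma tot_var_null Y : F Y -> tot_var F mu Y = 0%E -> mu_pos Y = 0 /\ mu_neg Y = 0.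
Proof.
move=> FY; rewrite tot_var_hahnE // => -[tv0].
by have := mu_pos_ge0 FY; have := mu_neg_ge0 FY; split; lra.
Qed.

Lemma Qmu_sub_range : Qm `<=` range q.
Proof.
move=> Q [QQ tvQ]; apply: contrapT => Qq.
suff tv0 : tot_var F mu (S Q) = 0%E by move: tvQ; rewrite tv0 ltxx.
apply: mu_null_off_supports => [|x SQx [n _ Sqx]]; first exact: FS.
apply: Qq; exists n => //; apply: contrapT => qQ.
by have : (S (q n) `&` S Q) x by []; rewrite S_disj.
Qed.

Lemma countable_Qmu : countable Qm.
Proof.
apply: (sub_countable (subset_card_le Qmu_sub_range)).
apply: (sub_countable (card_image_le _ _)); exact: countableP.
Qed.

Lemma esum_Qmu (g : (set Omega -> R) -> \bar R) : (forall Q, Qm Q -> (0 <= g Q)%E) ->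
  esum Qm g = (\sum_(n <oo | first_occurrence q n) (if q n \in Qm then g (q n) else 0))%E.
Proof.
move=> g0; have Qm_first : Qm `<=` q @` [set n | first_occurrence q n].
  move=> Q /Qmu_sub_range [n _ <-]; have [k kq qk] := first_occurrence_exists q n.
  by exists k.
rewrite -{1}(setIidr Qm_first) esum_mkcondr esum_pred_image //.
- by move=> n _; case: ifPn => // /set_mem; exact: g0.
- by move=> i j /set_mem fi /set_mem fj; exact: first_occurrence_inj.
Qed.

Section localized.
Variable m : set Omega -> R.
Hypotheses (Hm : is_signed_measure F m) (m_ge0 : forall X, F X -> 0 <= m X).
Hypothesis m_null : forall Y, F Y -> tot_var F mu Y = 0%E -> m Y = 0.

(* The paper's m^Q(X), summed along the range of [q] without repetition;
   this range contains Q(mu), and the extra terms vanish. *)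
Definition localized X :=
  (\sum_(n <oo | first_occurrence q n) (m (X `&` S (q n)))%:E)%E.

Lemma localized_ge0 X : H X -> (0 <= localized X)%E.
Proof. by move=> HX; apply: nneseries_ge0 => n _ _; rewrite lee_fin; apply/m_ge0/FSI. Qed.

Lemma esum_localized X : H X -> esum Qm (fun Q => (m (X `&` S Q))%:E) = localized X.
Proof.
move=> HX; rewrite esum_Qmu => [|Q [QQ _]]; last by rewrite lee_fin; apply/m_ge0/FSI.
apply: eq_eseriesr => n _; case: ifPn => // /negP nQ.
rewrite m_null //; first exact: FSI.
apply: (tot_var_null_sub (FSI HX (Qf_q n)) (FS (Qf_q n))); first exact: subIsetr.
by rewrite leNgt; apply/negP => tv; apply: nQ; apply/mem_set.
Qed.

Lemma localized_F X : F X -> localized X = (m X)%:E.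
Proof.
move=> FX; pose D n := if first_occurrence q n then X `&` S (q n) else set0.
have FD n : F (D n).
  by rewrite /D; case: ifP => _; [apply: salgI => //; exact/FS/Qf_q|exact: salg0].
have tD : trivIset setT D.
  move=> i j _ _; rewrite /D.
  case: ifPn => fi; case: ifPn => fj; rewrite ?setI0 ?set0I; try by case.
  move=> [x [[_ Six] [_ Sjx]]]; apply: first_occurrence_inj fi fj _; apply: contrapT => qij.
  by have : (S (q i) `&` S (q j)) x by []; rewrite S_disj.
rewrite /localized eseries_mkcond (@eq_eseriesr _ _ (fun n => (m (D n))%:E)); last first.
  by move=> n _; rewrite /D; case: ifP => //; rewrite (signed_measure0 Hm).
rewrite (eseries_EFin (Hm.2 D FD tD)); congr EFin.
have -> : \bigcup_n D n = X `&` U.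
  apply/seteqP; split => [x [n _]|x [Xx [n _ Snx]]].
    by rewrite /D; case: ifP => // _ [Xx Sx]; split => //; exists n.
  have [k fk qk] := first_occurrence_exists q n.
  by exists k => //; rewrite /D fk qk.
rewrite [RHS](signed_measure_splitI HF Hm FX FU) [m (X `\` U)]m_null ?addr0 //.
- exact: salgD.
- by apply: mu_null_off_supports; [exact: salgD|move=> x []].
Qed.

Lemma localized_sigma_additive (B : (set Omega)^nat) : (forall i, H (B i)) ->
  trivIset setT B -> localized (\bigcup_i B i) = (\sum_(i <oo) localized (B i))%E.
Proof.
move=> HB tB; rewrite /localized nneseries_interchange; last first.
  by move=> i j; rewrite lee_fin; apply/m_ge0/FSI.
apply: eq_eseriesr => n _; rewrite setI_bigcupl; apply/esym/eseries_EFin/Hm.2.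
  by move=> i; exact: FSI.
by move=> i j _ _ [x [[Bi _] [Bj _]]]; apply: tB => //; exists x.
Qed.

Lemma localized_fin X : H X -> localized X \is a fin_num.
Proof.
move=> HX; rewrite ge0_fin_numE ?localized_ge0 //; apply: le_lt_trans (ltry (m setT)).
rewrite -localized_F; last exact: salgT.
apply: lee_nneseries => [n _ _|n _]; rewrite lee_fin; first exact/m_ge0/(FSI HX (Qf_q n)).
rewrite setTI; apply: (le_signed_measure HF Hm m_ge0).
- exact: FSI HX (Qf_q n).
- exact/FS/Qf_q.
- exact: subIsetr.
Qed.

End localized.

Let mu_pos_null Y : F Y -> tot_var F mu Y = 0%E -> mu_pos Y = 0.
Proof. by move=> FY /(tot_var_null FY) []. Qed.

Let mu_neg_null Y : F Y -> tot_var F mu Y = 0%E -> mu_neg Y = 0.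
Proof. by move=> FY /(tot_var_null FY) []. Qed.

Let muQ A := family_sum Qm (fun Q => mu (A `&` S Q)).

Let family_split A : H A ->
  [/\ forall Q, Qm Q -> 0 <= mu_pos (A `&` S Q),
      forall Q, Qm Q -> 0 <= mu_neg (A `&` S Q),
      forall Q, Qm Q -> mu (A `&` S Q) = mu_pos (A `&` S Q) - mu_neg (A `&` S Q),
      esum Qm (fun Q => (mu_pos (A `&` S Q))%:E) \is a fin_num &
      esum Qm (fun Q => (mu_neg (A `&` S Q))%:E) \is a fin_num].
Proof.
move=> HA; split.
- by move=> Q [QQ _]; apply/mu_pos_ge0/FSI.
- by move=> Q [QQ _]; apply/mu_neg_ge0/FSI.
- by move=> Q [QQ _]; rewrite opprK; apply: (hahn_splitI HF Hmu hPN); exact: FSI.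
- by rewrite (esum_localized mu_pos_ge0 mu_pos_null HA); exact: localized_fin.
- by rewrite (esum_localized mu_neg_ge0 mu_neg_null HA); exact: localized_fin.
Qed.

Lemma abs_summable_localization A : H A -> abs_summable Qm (fun Q => mu (A `&` S Q)).
Proof. by case/family_split; exact: abs_summableB. Qed.

Lemma localizationE A : H A ->
  muQ A = fine (localized mu_pos A) - fine (localized mu_neg A).
Proof.
move=> HA; have [f1_ge0 f2_ge0 fE f1_fin f2_fin] := family_split HA.
rewrite /muQ (family_sumB f1_ge0 f2_ge0 fE f1_fin f2_fin).
rewrite (esum_localized mu_pos_ge0 mu_pos_null HA).
by rewrite (esum_localized mu_neg_ge0 mu_neg_null HA).
Qed.

Lemma localization_F A : F A -> muQ A = mu A.
Proof.
move=> FA; rewrite localizationE; last exact: FH.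
by rewrite !localized_F //= opprK -(hahn_splitI HF Hmu hPN FA).
Qed.

Lemma localization_signed_measure : is_signed_measure H muQ.
Proof.
split; first by rewrite localization_F ?(signed_measure0 Hmu) //; exact: salg0.
move=> B HB tB; have HU : H (\bigcup_i B i) by exact: salg_bigcup.
rewrite localizationE //.
have -> : (fun n => \sum_(i < n) muQ (B i)) = (fun n =>
    \sum_(i < n) fine (localized mu_pos (B i)) -
    \sum_(i < n) fine (localized mu_neg (B i))).
  by apply/funext => n; rewrite -sumrB; apply: eq_bigr => i _; rewrite localizationE.
apply: cvgB; rewrite localized_sigma_additive //; apply: cvg_fine_nneseries.
- by move=> i; exact: localized_ge0.
- by move=> i; exact: localized_fin.
- by rewrite -localized_sigma_additive //; exact: localized_fin.
- by move=> i; exact: localized_ge0.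
- by move=> i; exact: localized_fin.
- by rewrite -localized_sigma_additive //; exact: localized_fin.
Qed.

Lemma localization_setIP A : H A -> muQ (A `&` P) = fine (localized mu_pos A).
Proof.
have [[FP _] _ _ PN0] := hPN; move=> HA.
rewrite localizationE; last exact: (salgI HH HA (FH FP)).
have -> : localized mu_neg (A `&` P) = 0%E.
  apply: eseries0 => n _ _; rewrite /mu_neg setIAC -(setIA A) PN0 setI0 set0I.
  by rewrite (signed_measure0 Hmu) oppr0.
rewrite subr0; congr fine; apply: eq_eseriesr => n _.
by rewrite /mu_pos setIAC -(setIA A) setIid setIAC.
Qed.

Lemma localization_setIN A : H A -> muQ (A `&` N) = - fine (localized mu_neg A).
Proof.
have [_ [FN _] _ PN0] := hPN; move=> HA.
rewrite localizationE; last exact: (salgI HH HA (FH FN)).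
have -> : localized mu_pos (A `&` N) = 0%E.
  apply: eseries0 => n _ _; rewrite /mu_pos setIAC -(setIA A) (setIC N) PN0 setI0 set0I.
  by rewrite (signed_measure0 Hmu).
rewrite sub0r; congr (- fine _); apply: eq_eseriesr => n _.
by rewrite /mu_neg setIAC -(setIA A) setIid setIAC.
Qed.

Lemma localization_hahn : is_hahn_decomposition H muQ P N.
Proof.
have [[FP _] [FN _] PNT PN0] := hPN; split => //.
- split; first exact: FH.
  move=> D HD DP; rewrite -(setIidl DP) localization_setIP //.
  exact/fine_ge0/localized_ge0.
- split; first exact: FH.
  move=> D HD DN; rewrite -(setIidl DN) localization_setIN // oppr_le0.
  exact/fine_ge0/localized_ge0.
Qed.

Lemma tot_var_localization A : H A ->
  tot_var H muQ A = esum Qm (fun Q => tot_var F mu (A `&` S Q)).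
Proof.
move=> HA; rewrite (tot_var_hahn HH localization_signed_measure localization_hahn HA).
rewrite localization_setIP // localization_setIN // opprK.
rewrite (@eq_esum _ _ _ _
    (fun Q => (mu_pos (A `&` S Q))%:E + (mu_neg (A `&` S Q))%:E)%E); last first.
  by move=> Q [QQ _]; rewrite tot_var_hahnE //; exact: FSI.
rewrite esumD => [|Q [QQ _]|Q [QQ _]]; last 2 first.
- by rewrite lee_fin; apply/mu_pos_ge0/FSI.
- by rewrite lee_fin; apply/mu_neg_ge0/FSI.
rewrite (esum_localized mu_pos_ge0 mu_pos_null HA).
rewrite (esum_localized mu_neg_ge0 mu_neg_null HA).
by rewrite EFinD !fineK //; exact: localized_fin.
Qed.

Lemma localization_properties :
  [/\ countable Qm,
      forall A, H A -> abs_summable Qm (fun Q => mu (A `&` S Q)),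
      is_signed_measure H muQ,
      forall A, F A -> muQ A = mu A &
      forall A, H A -> tot_var H muQ A = esum Qm (fun Q => tot_var F mu (A `&` S Q))].
Proof.
split.
- exact: countable_Qmu.
- exact: abs_summable_localization.
- exact: localization_signed_measure.
- exact: localization_F.
- exact: tot_var_localization.
Qed.

End localization.

Theorem theorem4p3 (R : realType) (Omega : Type) (F : set (set Omega))
    (Pf Qf : set (set Omega -> R)) (S : (set Omega -> R) -> set Omega) :
  is_sigma_algebra F ->
  (forall P, Pf P -> is_probability F P) ->
  pre_hahn_localizable F Pf Qf S ->
  (forall Q Q', Qf Q -> Qf Q' -> Q <> Q' -> S Q `&` S Q' = set0) ->
  forall mu : set Omega -> R, ca F Pf mu ->
  let H := hahn_extension F Qf S in
  let Qm := Qmu F Qf S mu in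
  let muQ := fun A => family_sum Qm (fun Q => mu (A `&` S Q)) in
  [/\ countable Qm,
      (forall A, H A -> abs_summable Qm (fun Q => mu (A `&` S Q))),
      is_signed_measure H muQ,
      (forall A, F A -> muQ A = mu A) &
      (forall A, H A -> (tot_var H muQ A =
                        esum Qm (fun Q => tot_var F mu (A `&` S Q)))%E)].
Proof.
move=> HF _ [Qf_prob FS delta _ Pf_sconv] S_disj mu.
move=> [Hmu [P0 /Pf_sconv [nu [c [q [Qf_q _ _ nuE]]] P0_nu] mu_P0]].
have q_null n Y : F Y -> Y `<=` ~` (\bigcup_k S (q k)) -> q n Y = 0.
  move=> FY YU; have Qn := Qf_q n.
  apply: (probability_null_outside HF (Qf_prob _ Qn) (FS _ Qn)) => //.
    by rewrite delta //; case: pselect.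
  by move=> y /YU + Sy; apply; exists n.
have mu_null Y : F Y -> Y `<=` ~` (\bigcup_k S (q k)) -> tot_var F mu Y = 0%E.
  move=> FY YU; apply: mu_P0 => //; apply: P0_nu => //.
  have nu0 : (fun n => \sum_(i < n) c i * q i Y) @ \oo --> (0 : R).
    apply: cvg_near_cst; apply: nearW => n.
    by rewrite big1 // => i _; rewrite q_null ?mulr0.
  exact: (cvg_unique _ (nuE Y FY) nu0).
have [P [N hPN]] := hahn_decomposition_exists HF Hmu.
exact: (localization_properties HF FS S_disj Hmu Qf_q mu_null hPN).
Qed.
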